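(* Let $d\ge 1$ and let $D_d=\langle x,y\mid y^2=1,\ x^d=1,\ y^{-1}xy=x^{-1}\rangle$ be the dihedral group of order $2d$. Let $I=\{0,1,\dots,\lfloor d/2\rfloor\}$; for $a\in I$ let $r_a=1$ if $2a\equiv 0\pmod d$ and $r_a=2$ otherwise, and $s_a=2/r_a$. For an integer $c$ let $\bar c\in I$ be the element with $\bar c\equiv c$ or $\bar c\equiv -c \pmod d$, and put $r_c:=r_{\bar c}$, $s_c:=s_{\bar c}$, $S_{c,\gamma}:=S_{\bar c,\gamma}$. The irreducible characters of $D_d$ are $\theta_{a,\alpha}$ for $a\in I$, $0\le\alpha<s_a$, where, with $\omega=e^{2\pi i/d}$, $\theta_{a,\alpha}(y^jx^i)=(-1)^{j\alpha}\sum_{s\in\{a,-a\}\bmod d}\omega^{si}$ if $r_a\mid j$ and $0$ otherwise (the sum over the set of residues $\{a \bmod d,-a\bmod d\}$). A quasigroup $Q$ of order $2d$ is a balanced cover of the weighted character quasigroup of $D_d$ if and only if there exist pairwise disjoint subsets $S_{a,\alpha}\subseteq Q$ with $|S_{a,\alpha}|=r_a^2$, for $a\in I$ and $0\le\alpha<s_a$, such that for all $a,b\in I$, $0\le\alpha<s_a$, $0\le\beta<s_b$, $$S_{a,\alpha}\cdot S_{b,\beta}=r_a\gcd(r_a,r_b)\sum_{i=0}^{r_b-1}\ \sum_{\gamma}\frac{S_{a+b(-1)^i,\gamma}}{r_{a+b(-1)^i}},$$ where the inner sum runs over all $0\le\gamma<s_{a+b(-1)^i}$ with $\alpha+\beta-\gamma\equiv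 0\pmod{\gcd(s_a,s_b)}$.
   Context: For subsets $A,B$ of $Q$, $A\cdot B=\sum_{a\in A,b\in B}ab$ is the formal sum in the free module on $Q$ (recording multiplicities), and a subset is identified with the sum of its elements; the displayed equation is an equality of formal linear combinations of elements of $Q$ with rational coefficients. The scalar product of class functions is $\langle\theta\mid\varphi\rangle=\frac{1}{|G|}\sum_{g}\theta(g)\overline{\varphi(g)}$. The weighted character quasigroup of a finite group $G$ has underlying set the irreducible characters, weights $w(\theta)=\theta(1)^2$, and multiplication function $\alpha(\theta_i,\theta_j,\theta_k)=\theta_i(1)\theta_j(1)\theta_k(1)\langle\theta_i\theta_j\mid\theta_k\rangle$. A quasigroup $Q$ of order $|G|$ covers it if there is a surjection $f$ from $Q$ onto the irreducible characters with $|f^{-1}\{\theta\}|=\theta(1)^2$ and $|\{(a,b)\in f^{-1}\{\theta_i\}\times f^{-1}\{\theta_j\}: f(ab)=\theta_k\}|=\alpha(\theta_i,\theta_j,\theta_k)$ for all $i,j,k$; the cover is balanced if for all $i,j$ and all $q\in Q$ the number of pairs $(a,b)\in f^{-1}\{\theta_i\}\times f^{-1}\{\theta_j\}$ with $ab=q$ depends only on $f(q)$. *)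

From HB Require Import structures.
From mathcomp Require Import all_boot all_order all_algebra all_fingroup all_field all_character.
Unset Printing Implicit Defensive.
Import Order.TTheory GRing.Theory Num.Theory.

Definition is_quasigroup (Q : finType) (mul : Q -> Q -> Q) : Prop :=
  (forall a : Q, bijective (mul a)) /\ (forall a : Q, bijective (fun b => mul b a)).

(* G is generated by x, y with y^2 = 1, x^d = 1, y^-1 x y = x^-1, and |G| = 2d;
   such a G is isomorphic to D_d = <x,y | y^2, x^d, y^-1xy = x^-1>. *)
Definition dihedral_pres (gT : finGroupType) (d : nat) (G : {group gT}) (x y : gT)
  : Prop :=
  [/\ G :=: <<[set x; y]>>%g, (y ^+ 2 = 1)%g, (x ^+ d = 1)%g,
      (x ^ y = x^-1)%g & #|G| = (2 * d)%N].

Local Open Scope ring_scope.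

Definition is_cover (gT : finGroupType) (G : {group gT}) (Q : finType)
  (mul : Q -> Q -> Q) (f : Q -> Iirr G) : Prop :=
  [/\ #|Q| = #|G|,
      (forall i : Iirr G, exists q : Q, f q = i),
      (forall i : Iirr G, (#|[set q | f q == i]|)%:R = ('chi[G]_i 1%g) ^+ 2 :> algC) &
      (forall i j k : Iirr G,
          (#|[set p : Q * Q | [&& f p.1 == i, f p.2 == j & f (mul p.1 p.2) == k]]|)%:R
          = 'chi[G]_i 1%g * 'chi[G]_j 1%g * 'chi[G]_k 1%g * '['chi[G]_i * 'chi[G]_j, 'chi[G]_k]
          :> algC)].

Definition is_balanced (gT : finGroupType) (G : {group gT}) (Q : finType)
  (mul : Q -> Q -> Q) (f : Q -> Iirr G) : Prop :=
  forall (i j : Iirr G) (q q' : Q), f q = f q' ->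
    #|[set p : Q * Q | [&& f p.1 == i, f p.2 == j & mul p.1 p.2 == q]]|
    = #|[set p : Q * Q | [&& f p.1 == i, f p.2 == j & mul p.1 p.2 == q']]|.

Definition balanced_cover (gT : finGroupType) (G : {group gT}) (Q : finType)
  (mul : Q -> Q -> Q) : Prop :=
  exists f : Q -> Iirr G, is_cover gT G Q mul f /\ is_balanced gT G Q mul f.

Definition dih_r (d a : nat) : nat := if (d %| 2 * a)%N then 1%N else 2%N.
Definition dih_s (d a : nat) : nat := (2 %/ dih_r d a)%N.
Definition dih_bar (d : nat) (c : int) : nat :=
  let m := `|(c %% d%:Z)%Z|%N in minn m (d - m).

(* coefficient of q in the formal product A . B (with multiplicities) *)
Definition prod_coef (Q : finType) (mul : Q -> Q -> Q) (A B : {set Q}) (q : Q) : nat :=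
  #|[set p : Q * Q | [&& p.1 \in A, p.2 \in B & mul p.1 p.2 == q]]|.

(* coefficient of q in
   r_a gcd(r_a,r_b) sum_{i<r_b} sum_{gamma} S_{a+b(-1)^i,gamma} / r_{a+b(-1)^i} *)
Definition rhs_coef (Q : finType) (d : nat) (S : nat -> nat -> {set Q})
  (a alpha b beta : nat) (q : Q) : rat :=
  ((dih_r d a * gcdn (dih_r d a) (dih_r d b))%N)%:R *
  \sum_(i < dih_r d b)
     let c := dih_bar d (a%:Z + b%:Z * (-1) ^+ i) in
     \sum_(gamma < dih_s d c |
             ((gcdn (dih_s d a) (dih_s d b))%:Z %| (alpha%:Z + beta%:Z - (gamma : nat)%:Z))%Z)
        (q \in S c gamma)%:R / (dih_r d c)%:R.
Arguments is_quasigroup {Q}.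
Arguments balanced_cover {gT}  G {Q}.
Arguments prod_coef {Q}.
Arguments rhs_coef {Q}.

From HB Require Import structures.
From mathcomp Require Import all_boot all_order all_algebra all_fingroup all_solvable all_field all_character.
From mathcomp Require Import zify ring.
Import Order.TTheory GRing.Theory Num.Theory.
Set Implicit Arguments. Unset Strict Implicit. Unset Printing Implicit Defensive.

(* A cover f : Q -> Irr(G) is balanced exactly when the coefficient of q in
   S_i . S_j (S_i the fibre of i) depends only on f q; the cover condition
   then forces it to be chi_i(1) chi_j(1) '[chi_i chi_j, chi_k] / chi_k(1),
   k = f q.  For the dihedral group the irreducible characters are the
   theta_(a,alpha), realised by explicit representations of degree 1 and 2:
   they are pairwise distinct and their squared degrees already add up to 2d.
   Their products decompose by comparing values on the elements x^i y^j, and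
   the resulting multiplicities are the coefficients of the stated equation. *)

Lemma disjoint_cover (I T : finType) (F : I -> {set T}) :
  (forall i j, i != j -> [disjoint F i & F j]) -> (\sum_i #|F i|)%N = #|T| ->
  forall t, exists i, t \in F i.
Proof.
move=> disjF sumF t; have : t \in \bigcup_i F i; last by case/bigcupP => i _; exists i.
suff -> : \bigcup_i F i = setT by rewrite inE.
apply/eqP; rewrite eqEcard subsetT cardsT -sumF -sum1_card.
by rewrite (partition_disjoint_bigcup _ _ disjF); apply/eq_leq/eq_bigr => i _; rewrite sum1_card.
Qed.

Section BalancedCover.
Variables (gT : finGroupType) (G : {group gT}) (Q : finType) (mul : Q -> Q -> Q).
Local Open Scope ring_scope.

Definition mul_count (f : Q -> Iirr G) i j q : nat :=
  #|[set p : Q * Q | [&& f p.1 == i, f p.2 == j & mul p.1 p.2 == q]]|.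

Lemma card_mul_fibre f i j k :
  #|[set p : Q * Q | [&& f p.1 == i, f p.2 == j & f (mul p.1 p.2) == k]]| =
  (\sum_(q | f q == k) mul_count f i j q)%N.
Proof.
rewrite -sum1_card (partition_big (fun p : Q * Q => mul p.1 p.2) [pred q | f q == k]) /=.
  apply: eq_bigr => q fq; rewrite /mul_count -sum1_card; apply: eq_bigl => p; rewrite !inE.
  by case: (mul p.1 p.2 =P q) => [-> | _]; rewrite ?fq ?andbT ?andbF.
by move=> p; rewrite inE => /and3P[].
Qed.

Definition cover_equations (f : Q -> Iirr G) : Prop :=
  (forall i, #|[set q | f q == i]|%:R = 'chi_i 1%g ^+ 2 :> algC) /\
  (forall i j q, (mul_count f i j q)%:R * 'chi_(f q) 1%g =
                 'chi_i 1%g * 'chi_j 1%g * '['chi_i * 'chi_j, 'chi_(f q)]).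

Lemma balanced_coverP : #|Q| = #|G| ->
  balanced_cover G mul <-> exists f, cover_equations f.
Proof.
move=> cardQ; split=> [[f [[_ _ card_fibre card_mul] bal]] | [f [card_fibre mul_countE]]].
  exists f; split=> // i j q; apply: (mulfI (irr1_neq0 (f q))).
  have := card_mul i j (f q); rewrite card_mul_fibre.
  rewrite (eq_bigr (fun=> mul_count f i j q)) => [|q' /eqP]; last exact: bal.
  rewrite sum_nat_const natrM (@eq_card _ _ [set q' | f q' == f q]) => [|q'].
    by rewrite card_fibre => total; rewrite mulrCA -expr2 mulrC total; ring.
  by rewrite inE.
have count_const i j q q' : f q = f q' -> mul_count f i j q = mul_count f i j q'.
  move=> fqq'; apply/eqP; rewrite -(eqr_nat algC); apply/eqP.
  by apply: (mulIf (irr1_neq0 (f q))); rewrite mul_countE fqq' -mul_countE.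
exists f; split=> //; split=> // [i | i j k].
  have : (0 < #|[set q | f q == i]|)%N.
    by rewrite lt0n -(pnatr_eq0 algC) card_fibre expf_eq0 (negbTE (irr1_neq0 i)) andbF.
  by case/card_gt0P => q; rewrite inE => /eqP; exists q.
apply: (mulIf (irr1_neq0 k)); rewrite card_mul_fibre natr_sum mulr_suml.
under eq_bigr => q /eqP fq do rewrite -fq mul_countE fq.
rewrite sumr_const -[_ *+ _]mulr_natl -cardsE card_fibre.
by ring.
Qed.

End BalancedCover.

Section DihedralGroup.
Variables (d : nat) (gT : finGroupType) (G : {group gT}) (x y : gT).
Hypotheses (d_gt0 : (0 < d)%N) (genG : G :=: <<[set x; y]>>%g)
  (y2 : (y ^+ 2 = 1)%g) (xd : (x ^+ d = 1)%g) (xJy : (x ^ y = x^-1)%g)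
  (cardG : #|G| = (2 * d)%N).
Local Open Scope group_scope.

Lemma x_in_G : x \in G. Proof. by rewrite genG mem_gen // !inE eqxx. Qed.
Lemma y_in_G : y \in G. Proof. by rewrite genG mem_gen // !inE eqxx orbT. Qed.

Lemma dihedral_mulg : G :=: <[x]> * <[y]>.
Proof.
have nXY : <[y]> \subset 'N(<[x]>) by rewrite cycle_subG inE -cycleJ xJy cycleV.
rewrite -norm_joinEr //; apply/eqP; rewrite eqEsubset join_subG !cycle_subG.
rewrite x_in_G y_in_G !andbT {1}genG gen_subG; apply/subsetP => z.
by rewrite !inE => /orP[] /eqP ->; rewrite mem_gen // inE cycle_id ?orbT.
Qed.

Lemma dihedral_orders : [/\ #[x] = d, #[y] = 2 & <[x]> :&: <[y]> = 1].
Proof.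
have card_mul := mul_cardG <[x]>%G <[y]>%G; rewrite /= -dihedral_mulg cardG in card_mul.
have ox : (#[x] <= d)%N by apply: dvdn_leq => //; rewrite order_dvdn xd.
have oy : (#[y] <= 2)%N by apply: dvdn_leq => //; rewrite order_dvdn y2.
have oxy : (0 < #|<[x]> :&: <[y]>|)%N by apply: cardG_gt0.
suff [-> -> oxy1] : [/\ #[x] = d, #[y] = 2 & #|<[x]> :&: <[y]>| = 1%N].
  by split => //; apply/eqP; rewrite trivg_card1 oxy1.
move: card_mul ox oy oxy; rewrite /order.
move: #|<[x]>| #|<[y]>| #|_ :&: _| => m n k mn_eq le_md le_n2 k_gt0.
have k1 : k = 1%N by nia.
by split; nia.
Qed.

Lemma order_x : #[x] = d. Proof. by case: dihedral_orders. Qed.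
Lemma order_y : #[y] = 2. Proof. by case: dihedral_orders. Qed.

Lemma dihedral_normal_form g : g \in G ->
  exists i j, [/\ (i < d)%N, (j < 2)%N & g = x ^+ i * y ^+ j].
Proof.
rewrite dihedral_mulg => /mulsgP [_ _ /cycleP [i ->] /cycleP [j ->] ->].
exists (i %% d)%N, (j %% 2)%N; rewrite !ltn_pmod //.
by rewrite -order_x -order_y !expg_mod_order.
Qed.

Lemma dihedral_normal_form_uniq i j k l : x ^+ i * y ^+ j = x ^+ k * y ^+ l ->
  (i = k %[mod d]) /\ (j = l %[mod 2]).
Proof.
move=> E; have [ox oy trivXY] := dihedral_orders.
have E' : (x ^+ k)^-1 * x ^+ i = y ^+ l * (y ^+ j)^-1.
  by rewrite -[x ^+ i](mulgK (y ^+ j)) E mulgA mulKg.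
have : (x ^+ k)^-1 * x ^+ i \in <[x]> :&: <[y]>.
  by rewrite inE groupM ?groupV ?mem_cycle //= E' groupM ?groupV ?mem_cycle.
rewrite trivXY => /set1gP xki1; move: (xki1); rewrite E' => ylj1.
split; apply/eqP.
- by rewrite -ox -eq_expg_mod_order eq_sym eq_mulVg1 xki1.
- by rewrite -oy -eq_expg_mod_order eq_sym eq_mulgV1 ylj1.
Qed.

Definition dih_coords (g : gT) : nat * nat :=
  if [pick p : 'I_d * 'I_2 | g == x ^+ p.1 * y ^+ p.2] is Some p
  then (val p.1, val p.2) else (0, 0)%N.

Lemma dih_coordsE i j : dih_coords (x ^+ i * y ^+ j) = (i %% d, j %% 2)%N.
Proof.
rewrite /dih_coords; case: pickP => [[k l] /eqP /= E | none].
  by case: (dihedral_normal_form_uniq E) => -> ->; rewrite !modn_small.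
have := none (Ordinal (ltn_pmod i d_gt0), Ordinal (ltn_pmod j (isT : 0 < 2)%N)).
by rewrite /= -{1}order_x -{1}order_y !expg_mod_order eqxx.
Qed.

Lemma dih_coordsP g : g \in G ->
  [/\ g = x ^+ (dih_coords g).1 * y ^+ (dih_coords g).2,
      ((dih_coords g).1 < d)%N & ((dih_coords g).2 < 2)%N].
Proof. by case/dihedral_normal_form => i [j [ltid ltj2 ->]]; rewrite dih_coordsE !modn_small. Qed.

Lemma dihedral_enum : G = [set x ^+ p.1 * y ^+ p.2 | p : 'I_d * 'I_2] :> {set gT}.
Proof.
apply/setP => g; apply/idP/imsetP => [Gg | [p _ ->]].
  by have [eg lt1 lt2] := dih_coordsP Gg; exists (Ordinal lt1, Ordinal lt2).
by rewrite groupM ?groupX ?x_in_G ?y_in_G.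
Qed.

Lemma xpow_inv k : x ^+ (d.-1 * k) = (x ^+ k)^-1.
Proof.
apply/eqP; rewrite eq_mulgV1 invgK -expgD addnC -mulSn prednK //.
by rewrite expgM xd expg1n.
Qed.

Lemma ypow_xpow j k :
  y ^+ j * x ^+ k = x ^+ (if odd j then d.-1 * k else k)%N * y ^+ j.
Proof.
have yV : y^-1 = y by apply/eqP; rewrite eq_invg_mul -expg2 y2.
have yx m : y * x ^+ m = x ^+ (d.-1 * m) * y.
  by rewrite conjgCV yV conjXg xJy expgVn xpow_inv.
elim: j => [|j IHj]; first by rewrite mulg1 mul1g.
rewrite expgS -mulgA IHj mulgA yx -mulgA /=.
by case: (odd j); rewrite //= !xpow_inv invgK.
Qed.

Lemma sum_dihedral (F : gT -> algC) :
  (\sum_(g in G) F g = \sum_(i < d) \sum_(j < 2) F (x ^+ i * y ^+ j)%g)%R.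
Proof.
rewrite dihedral_enum big_imset /=; first by rewrite pair_big.
move=> [i j] [k l] _ _ /= /dihedral_normal_form_uniq [].
by rewrite !modn_small // => ik jl; congr (_, _); apply: val_inj.
Qed.

Local Open Scope ring_scope.

Lemma cfun_dihedral (phi psi : 'CF(G)) :
  (forall i j, phi (x ^+ i * y ^+ j)%g = psi (x ^+ i * y ^+ j)%g) -> phi = psi.
Proof. by move=> eq_xy; apply/cfun_inP => g /dih_coordsP [-> _ _]. Qed.

Section MatrixRepresentation.
Variables (n : nat) (X : nat -> 'M[algC]_n) (Y : 'M[algC]_n).
Hypotheses (X0 : X 0 = 1%:M) (XD : forall i k, X i *m X k = X (i + k))
  (Xd : X d = 1%:M) (YY : Y *m Y = 1%:M)
  (YX : forall k, Y *m X k = X (d.-1 * k) *m Y).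

Definition Ypow j := if odd j then Y else 1%:M.
Definition dih_mx (g : gT) := X (dih_coords g).1 *m Ypow (dih_coords g).2.

Lemma X_mod i : X (i %% d) = X i.
Proof.
have Xmuld q : X (q * d) = 1%:M.
  by elim: q => [|q IHq]; rewrite ?X0 // mulSn -XD Xd IHq mul1mx.
by rewrite {2}(divn_eq i d) -XD Xmuld mul1mx.
Qed.

Lemma dih_mxE i j : dih_mx (x ^+ i * y ^+ j)%g = X i *m Ypow j.
Proof. by rewrite /dih_mx dih_coordsE /= X_mod /Ypow modn2 oddb. Qed.

Lemma Ypow_mul j l : Ypow j *m Ypow l = Ypow (j + l).
Proof. by rewrite /Ypow oddD; case: (odd j); case: (odd l); rewrite ?mul1mx ?mulmx1. Qed.

Lemma Ypow_X j k : Ypow j *m X k = X (if odd j then d.-1 * k else k) *m Ypow j.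
Proof. by rewrite /Ypow; case: (odd j); rewrite ?mul1mx ?mulmx1. Qed.

Lemma dih_mx_repr : mx_repr G dih_mx.
Proof.
split; first by rewrite -[1%g](mulg1 1%g) -{1}(expg0 x) -(expg0 y) dih_mxE X0 /Ypow mul1mx.
move=> g h /dih_coordsP [-> _ _] /dih_coordsP [-> _ _].
move: (dih_coords g) (dih_coords h) => [i j] [k l] /=.
rewrite -mulgA (mulgA (y ^+ j)%g) ypow_xpow !mulgA -mulgA -!expgD !dih_mxE.
by rewrite -XD -Ypow_mul !mulmxA -[X i *m _ *m X k]mulmxA Ypow_X !mulmxA.
Qed.

Definition dih_char : 'CF(G) := cfRepr (MxRepresentation dih_mx_repr).

Lemma dih_charE i j : dih_char (x ^+ i * y ^+ j)%g = \tr (X i *m Ypow j).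
Proof. by rewrite cfunE groupM ?groupX ?x_in_G ?y_in_G // mulr1n /= dih_mxE. Qed.

End MatrixRepresentation.

Lemma unity_neq0 (w : algC) : w ^+ d = 1 -> w != 0.
Proof. by apply: contra_eq_neq => ->; rewrite expr0n gtn_eqF // eq_sym oner_eq0. Qed.

Lemma unity_exp_inv (w : algC) k : w ^+ d = 1 -> w ^+ (d.-1 * k) = (w ^+ k)^-1.
Proof.
move=> wd; apply: (mulIf (expf_neq0 k (unity_neq0 wd))).
by rewrite mulVf ?expf_neq0 ?unity_neq0 // -exprD -mulSnr prednK // exprM wd expr1n.
Qed.

Lemma sqr1_inv (z : algC) : z ^+ 2 = 1 -> z^-1 = z.
Proof. by move/eqP; rewrite sqrf_eq1 => /orP[] /eqP ->; rewrite ?invr1 ?invrN1. Qed.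

Lemma sqr1_exp (z : algC) j : z ^+ 2 = 1 -> z ^+ j = if odd j then z else 1.
Proof.
move=> z2; rewrite {1}(divn_eq j 2) exprD mulnC exprM z2 expr1n mul1r modn2.
by case: odd.
Qed.

(* The [n]-th root of unity [z], or the junk value [1]: it makes the
   representations below defined for every parameter. *)
Definition to_unity n (z : algC) := if z ^+ n == 1 then z else 1.

Lemma to_unityX n z : to_unity n z ^+ n = 1.
Proof. by rewrite /to_unity; case: ifP => [/eqP | _]; rewrite ?expr1n. Qed.

Lemma to_unityE n z : z ^+ n = 1 -> to_unity n z = z.
Proof. by rewrite /to_unity => ->; rewrite eqxx. Qed.

Lemma to_unity_exp n m z : z ^+ m = 1 -> to_unity n z ^+ m = 1.
Proof. by rewrite /to_unity; case: ifP; rewrite ?expr1n. Qed.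

Section LinearCharacters.
Variables (z e : algC).
Let w := to_unity 2 (to_unity d z).
Let e' := to_unity 2 e.

Fact lin_root2 : w ^+ 2 = 1. Proof. exact: to_unityX. Qed.
Fact lin_rootd : w ^+ d = 1. Proof. by apply: to_unity_exp; apply: to_unityX. Qed.

Definition lin_X i : 'M[algC]_1 := (w ^+ i)%:M.
Definition lin_Y : 'M[algC]_1 := e'%:M.

Fact lin_X0 : lin_X 0 = 1%:M. Proof. by rewrite /lin_X expr0. Qed.
Fact lin_XD i k : lin_X i *m lin_X k = lin_X (i + k).
Proof. by rewrite /lin_X -scalar_mxM exprD. Qed.
Fact lin_Xd : lin_X d = 1%:M.
Proof. by rewrite /lin_X lin_rootd. Qed.
Fact lin_YY : lin_Y *m lin_Y = 1%:M.
Proof. by rewrite /lin_Y -scalar_mxM -expr2 to_unityX. Qed.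
Fact lin_YX k : lin_Y *m lin_X k = lin_X (d.-1 * k) *m lin_Y.
Proof.
rewrite /lin_X /lin_Y -!scalar_mxM mulrC unity_exp_inv ?lin_rootd //.
by rewrite sqr1_inv // exprAC lin_root2 expr1n.
Qed.

Definition chi_lin : 'CF(G) := dih_char lin_X0 lin_XD lin_Xd lin_YY lin_YX.

Lemma chi_lin_irr : chi_lin \in irr G.
Proof. by apply: lin_char_irr; rewrite qualifE /= cfRepr_char cfRepr1 eqxx. Qed.

Lemma chi_lin1 : chi_lin 1%g = 1.
Proof. exact: cfRepr1. Qed.

Lemma chi_linE i j : z ^+ 2 = 1 -> z ^+ d = 1 -> e ^+ 2 = 1 ->
  chi_lin (x ^+ i * y ^+ j)%g = z ^+ i * e ^+ j.
Proof.
move=> z2 zd e2; rewrite dih_charE /Ypow /lin_X /lin_Y /w /e' !to_unityE //.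
by rewrite (sqr1_exp j e2); case: odd; rewrite ?mulmx1 -?scalar_mxM mxtrace_scalar ?mulr1.
Qed.

End LinearCharacters.

Section DegreeTwoCharacters.
Variable z : algC.
Let w := to_unity d z.

Fact two_rootd : w ^+ d = 1. Proof. exact: to_unityX. Qed.

Definition two_X i : 'M[algC]_2 := \matrix_(r, s)
  (if r == s then if r == 0 then w ^+ i else (w ^+ i)^-1 else 0).
Definition two_Y : 'M[algC]_2 := \matrix_(r, s) (r != s)%:R.

Ltac mx2_entries := apply/matrixP => [[[|[|//]] ?] [[|[|//]] ?]];
  rewrite !mxE ?big_ord_recl ?big_ord0 ?mxE.

Fact two_X0 : two_X 0 = 1%:M.
Proof. by mx2_entries; rewrite /= ?expr0 ?invr1. Qed.
Fact two_XD i k : two_X i *m two_X k = two_X (i + k).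
Proof. by mx2_entries; rewrite /= ?mulr0 ?mul0r ?addr0 ?add0r ?exprD ?invfM. Qed.
Fact two_Xd : two_X d = 1%:M.
Proof. by mx2_entries; rewrite /= ?two_rootd ?invr1. Qed.
Fact two_YY : two_Y *m two_Y = 1%:M.
Proof. by mx2_entries; rewrite /= ?mulr0 ?mul0r ?mulr1 ?addr0 ?add0r. Qed.
Fact two_YX k : two_Y *m two_X k = two_X (d.-1 * k) *m two_Y.
Proof.
mx2_entries; rewrite /= unity_exp_inv ?two_rootd //;
  by rewrite ?mulr0 ?mul0r ?mulr1 ?mul1r ?addr0 ?add0r ?invrK.
Qed.

Definition chi_two : 'CF(G) := dih_char two_X0 two_XD two_Xd two_YY two_YX.

Lemma chi_two_char : chi_two \is a character.
Proof. exact: cfRepr_char. Qed.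

Lemma chi_two1 : chi_two 1%g = 2%:R.
Proof. exact: cfRepr1. Qed.

Lemma chi_twoE i j : z ^+ d = 1 ->
  chi_two (x ^+ i * y ^+ j)%g = if odd j then 0 else z ^+ i + (z ^+ i)^-1.
Proof.
move=> zd; rewrite dih_charE /Ypow /mxtrace.
case: odd; rewrite ?mulmx1 !big_ord_recl big_ord0 !mxE ?big_ord_recl ?big_ord0 ?mxE /=;
  rewrite /w to_unityE //.
  by rewrite !mulr0 !mul0r !addr0.
by rewrite addr0.
Qed.

End DegreeTwoCharacters.

Lemma unity_conj (w : algC) : w ^+ d = 1 -> w^* = w^-1.
Proof.
move=> wd; have normw : `|w| = 1.
  by apply/eqP; rewrite -(pexpr_eq1 d_gt0) ?normr_ge0 // -normrX wd normr1.
apply: (mulfI (unity_neq0 wd)).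
by rewrite -normCK normw expr1n mulfV ?unity_neq0.
Qed.

Lemma geom_unity0 (w : algC) : w ^+ d = 1 -> w != 1 -> \sum_(i < d) w ^+ i = 0.
Proof.
move=> wd w_neq1; have := subrX1 w d; rewrite wd subrr => /esym/eqP.
by rewrite mulf_eq0 subr_eq0 (negbTE w_neq1) => /eqP.
Qed.

(* [|chi_two z (x^i)|^2 = z^(2i) + 2 + z^(-2i)], and the geometric sums of
   [z^(2i)] and [z^(-2i)] over [i < d] vanish since [z^2 != 1]. *)
Lemma chi_two_norm z : z ^+ d = 1 -> z ^+ 2 != 1 -> '[chi_two z] = 1.
Proof.
move=> zd z2; have z_neq0 := unity_neq0 zd.
have z2d : (z ^+ 2) ^+ d = 1 by rewrite exprAC zd expr1n.
rewrite cfdotE sum_dihedral.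
under eq_bigr => i _.
  rewrite !big_ord_recl big_ord0 !chi_twoE //= mul0r !addr0 rmorphD /= fmorphV /=.
  rewrite rmorphXn /= unity_conj // exprVn invrK.
  have -> : (z ^+ i + (z ^+ i)^-1) * ((z ^+ i)^-1 + z ^+ i) =
            (z ^+ 2) ^+ i + 2%:R + ((z ^+ 2)^-1) ^+ i.
    by rewrite exprVn exprAC; field; rewrite expf_neq0.
  over.
rewrite !big_split /= !geom_unity0 ?invr_eq1 // ?exprVn ?z2d ?invr1 //.
rewrite add0r addr0 !sumr_const card_ord cardG -mulrnDr addnn -mul2n mulVf //.
by rewrite pnatr_eq0 muln_eq0 -lt0n d_gt0.
Qed.

Lemma chi_two_irr z : z ^+ d = 1 -> z ^+ 2 != 1 -> chi_two z \in irr G.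
Proof. by move=> zd z2; rewrite irrEchar chi_two_char chi_two_norm ?eqxx. Qed.

Lemma chi_twoV z : z ^+ d = 1 -> chi_two z^-1 = chi_two z.
Proof.
move=> zd; apply: cfun_dihedral => i j.
by rewrite !chi_twoE ?exprVn ?zd ?invr1 // invrK addrC.
Qed.

Lemma chi_two_split z : z ^+ 2 = 1 -> z ^+ d = 1 ->
  chi_two z = chi_lin z 1 + chi_lin z (-1).
Proof.
move=> z2 zd; apply: cfun_dihedral => i j.
have sqrN1 : (-1 : algC) ^+ 2 = 1 by rewrite sqrrN expr1n.
rewrite [RHS]cfunE !chi_twoE ?chi_linE ?sqrN1 ?expr1n // (sqr1_exp j sqrN1).
rewrite sqr1_inv; last by rewrite exprAC z2 expr1n.
by case: odd; rewrite ?mulr1 ?mulrN1 ?subrr.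
Qed.

Lemma chi_lin_mul z w e f : z ^+ 2 = 1 -> z ^+ d = 1 -> w ^+ 2 = 1 -> w ^+ d = 1 ->
  e ^+ 2 = 1 -> f ^+ 2 = 1 -> chi_lin z e * chi_lin w f = chi_lin (z * w) (e * f).
Proof.
move=> z2 zd w2 wd e2 f2; apply: cfun_dihedral => i j.
by rewrite cfunE !chi_linE ?exprMn ?z2 ?w2 ?zd ?wd ?e2 ?f2 ?mulr1 // mulrACA.
Qed.

Lemma chi_lin_two_mul z e w : z ^+ 2 = 1 -> z ^+ d = 1 -> e ^+ 2 = 1 -> w ^+ d = 1 ->
  chi_lin z e * chi_two w = chi_two (z * w).
Proof.
move=> z2 zd e2 wd; apply: cfun_dihedral => i j.
rewrite cfunE !chi_twoE ?chi_linE ?exprMn ?zd ?wd ?mulr1 // (sqr1_exp j e2).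
have zi_inv : (z ^+ i)^-1 = z ^+ i by rewrite sqr1_inv // exprAC z2 expr1n.
by case: odd; rewrite ?mulr0 // mulr1 mulrDr invfM zi_inv.
Qed.

Lemma chi_two_mul u v : u ^+ d = 1 -> v ^+ d = 1 ->
  chi_two u * chi_two v = chi_two (u * v) + chi_two (u * v^-1).
Proof.
move=> ud vd; have uvd : (u * v) ^+ d = 1 by rewrite exprMn ud vd mulr1.
have uVvd : (u * v^-1) ^+ d = 1 by rewrite exprMn exprVn ud vd invr1 mulr1.
apply: cfun_dihedral => i j; rewrite [LHS]cfunE [RHS]cfunE !chi_twoE //.
case: odd; rewrite ?mulr0 ?addr0 // !exprMn !exprVn.
have ui_neq0 : u ^+ i != 0 by rewrite expf_neq0 ?unity_neq0.
have vi_neq0 : v ^+ i != 0 by rewrite expf_neq0 ?unity_neq0.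
by field; rewrite ui_neq0 vi_neq0.
Qed.

Definition omega : algC := sval (C_prim_root_exists d_gt0).

Lemma omega_prim : d.-primitive_root omega.
Proof. exact: svalP (C_prim_root_exists d_gt0). Qed.

Lemma omegaX_unity c : (omega ^+ c) ^+ d = 1.
Proof. by rewrite exprAC (prim_expr_order omega_prim) expr1n. Qed.

Lemma omega_neq0 : omega != 0.
Proof. by rewrite -(expr1 omega) unity_neq0 ?omegaX_unity. Qed.

Lemma dih_rE c : dih_r d c = if (omega ^+ c) ^+ 2 == 1 then 1%N else 2%N.
Proof. by rewrite /dih_r (prim_order_dvd omega_prim) mulnC exprM. Qed.

Lemma dih_r_gt0 c : (0 < dih_r d c)%N.
Proof. by rewrite /dih_r; case: ifP. Qed.

Lemma dih_rs c : (dih_r d c = 1%N /\ dih_s d c = 2%N) \/ (dih_r d c = 2%N /\ dih_s d c = 1%N).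
Proof. by rewrite /dih_s /dih_r; case: ifP; [left | right]. Qed.

Definition theta_root (z : algC) (g : nat) : 'CF(G) :=
  if z ^+ 2 == 1 then chi_lin z ((-1) ^+ g) else chi_two z.

Definition theta (c g : nat) : 'CF(G) := theta_root (omega ^+ c) g.

Lemma sqrN1X g : ((-1 : algC) ^+ g) ^+ 2 = 1.
Proof. by rewrite exprAC sqrrN !expr1n. Qed.

Lemma theta_rootV z g : z ^+ d = 1 -> theta_root z^-1 g = theta_root z g.
Proof.
move=> zd; rewrite /theta_root exprVn invr_eq1.
by case: ifP => [/eqP/sqr1_inv -> | _]; rewrite ?chi_twoV.
Qed.

Lemma theta_irr c g : theta c g \in irr G.
Proof.
rewrite /theta /theta_root; case: ifP => [_ | /negbT]; first exact: chi_lin_irr.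
exact/chi_two_irr/omegaX_unity.
Qed.

Lemma theta1 c g : theta c g 1%g = (dih_r d c)%:R.
Proof. by rewrite /theta /theta_root dih_rE; case: ifP; rewrite ?chi_lin1 ?chi_two1. Qed.

Lemma half_lt : (d./2 < d)%N.
Proof. by rewrite -divn2 ltn_Pdiv. Qed.

Lemma omegaX_inj a b : (a <= d./2)%N -> (b <= d./2)%N -> omega ^+ a = omega ^+ b -> a = b.
Proof.
move=> ha hb /eqP; rewrite (eq_prim_root_expr omega_prim) !modn_small => [/eqP //||];
by apply: leq_ltn_trans half_lt.
Qed.

Lemma omegaX_trace_inj a b : (a <= d./2)%N -> (b <= d./2)%N ->
  omega ^+ a + (omega ^+ a)^-1 = omega ^+ b + (omega ^+ b)^-1 -> a = b.
Proof.
move=> ha hb trace_ab; set A := omega ^+ a in trace_ab; set B := omega ^+ b in trace_ab.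
have A_neq0 : A != 0 by rewrite expf_neq0 ?omega_neq0.
have B_neq0 : B != 0 by rewrite expf_neq0 ?omega_neq0.
have : (A - B) * (1 - (A * B)^-1) == 0.
  suff -> : (A - B) * (1 - (A * B)^-1) = (A + A^-1) - (B + B^-1) by rewrite trace_ab subrr.
  by field; rewrite A_neq0 B_neq0.
rewrite mulf_eq0 !subr_eq0 => /orP[/eqP/omegaX_inj -> // | ].
rewrite eq_sym invr_eq1 -exprD -(prim_order_dvd omega_prim) => d_dvd_ab.
have := odd_double_half d; have := dvdn_leq _ d_dvd_ab; case: posnP => [ab0 _|_ /(_ isT)]; lia.
Qed.

Lemma theta_inj a al b be : (a <= d./2)%N -> (al < dih_s d a)%N ->
  (b <= d./2)%N -> (be < dih_s d b)%N -> theta a al = theta b be -> a = b /\ al = be.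
Proof.
move=> ha hal hb hbe E.
have at_x := congr1 (fun phi : 'CF(G) => phi (x ^+ 1 * y ^+ 0)%g) E.
have at_y := congr1 (fun phi : 'CF(G) => phi (x ^+ 0 * y ^+ 1)%g) E; clear E.
move: at_x at_y hal hbe; rewrite /theta /theta_root /dih_s !dih_rE.
have sign_neq0 g : ((-1 : algC) ^+ g) != 0 by rewrite expf_neq0 ?oppr_eq0 ?oner_eq0.
case: ifP => /eqP a2; case: ifP => /eqP b2.
- rewrite !chi_linE ?omegaX_unity ?sqrN1X // !expr1 !expr0 !mulr1 !mul1r.
  move=> /omegaX_inj-> // sign_eq hal hbe; split=> //; move: sign_eq.
  have N1_neq1 : (-1 : algC) != 1 by rewrite lt_eqF // (lt_trans (ltrN10 _) ltr01).
  case: al hal => [|[|//]] _; case: be hbe => [|[|//]] _ //= /eqP;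
    by rewrite ?expr0 ?expr1 ?(negbTE N1_neq1) // eq_sym (negbTE N1_neq1).
- rewrite !chi_linE ?chi_twoE ?omegaX_unity ?sqrN1X //= expr0 mul1r expr1 => _ /eqP.
  by rewrite (negbTE (sign_neq0 _)).
- rewrite !chi_linE ?chi_twoE ?omegaX_unity ?sqrN1X //= expr0 mul1r expr1 => _ /eqP.
  by rewrite eq_sym (negbTE (sign_neq0 _)).
- rewrite !chi_twoE ?omegaX_unity //= !expr1 => /omegaX_trace_inj-> //.
  by case: al => // _; case: be.
Qed.

Lemma sum_dih_r : (\sum_(a < (d./2).+1) dih_r d a)%N = d.
Proof.
have d_halves := odd_double_half d; rewrite -muln2 in d_halves.
have r_mid a : (0 < a)%N -> (2 * a < d)%N -> dih_r d a = 2%N.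
  by move=> a_gt0 lt_2a_d; rewrite /dih_r gtnNdvd // muln_gt0.
case def_m: d./2 d_halves => [|m] d_halves.
  by rewrite big_ord_recl big_ord0 /dih_r muln0 dvdn0; lia.
rewrite big_ord_recl big_ord_recr /= {1}/dih_r muln0 dvdn0.
rewrite (eq_bigr (fun _ => 2%N)) => [|i _]; last first.
  by apply: r_mid; rewrite /bump /=; have := ltn_ord i; lia.
rewrite /bump /= sum_nat_const card_ord; case: odd d_halves => /= d_halves.
  by rewrite r_mid; lia.
by rewrite /dih_r (_ : 2 * _ = d)%N ?dvdnn; lia.
Qed.

Lemma sum_dih_r_sqr :
  (\sum_(p : 'I_(d./2).+1 * 'I_2 | (p.2 < dih_s d p.1)%N) dih_r d p.1 ^ 2)%N = (2 * d)%N.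
Proof.
transitivity (\sum_(a < (d./2).+1) \sum_(al < 2 | (al < dih_s d a)%N) dih_r d a ^ 2)%N.
  by rewrite pair_big_dep; apply: eq_bigl.
rewrite -[in RHS]sum_dih_r big_distrr /=; apply: eq_bigr => a _.
by rewrite big_mkcond !big_ord_recl big_ord0; case: (dih_rs a) => [[-> ->] | [-> ->]].
Qed.

Definition theta_iirr c g : Iirr G := cfIirr (theta c g).

Lemma theta_iirrE c g : 'chi_(theta_iirr c g) = theta c g.
Proof. exact/cfIirrE/theta_irr. Qed.

Lemma eq_theta_iirr a al b be : (a <= d./2)%N -> (al < dih_s d a)%N ->
  (b <= d./2)%N -> (be < dih_s d b)%N ->
  (theta_iirr a al == theta_iirr b be) = ((a, al) == (b, be)).
Proof.
move=> ha hal hb hbe; apply/eqP/eqP => [E | [-> ->] //].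
have := congr1 (fun i => 'chi[G]_i) E; rewrite /= !theta_iirrE.
by case/theta_inj => // -> ->.
Qed.

(* Degree count: the [theta]s already exhaust [\sum chi(1)^2 = |G|]. *)
Lemma theta_iirr_surj i : exists a al,
  [/\ (a <= d./2)%N, (al < dih_s d a)%N & theta_iirr a al = i].
Proof.
pose V := [set p : 'I_(d./2).+1 * 'I_2 | (p.2 < dih_s d p.1)%N].
pose h (p : 'I_(d./2).+1 * 'I_2) := theta_iirr p.1 p.2.
have h_inj : {in V &, injective h}.
  move=> [a al] [b be]; rewrite !inE /= => hal hbe /eqP.
  rewrite /h eq_theta_iirr -1?ltnS // => /eqP[ab albe].
  by congr (_, _); apply: val_inj.
suff : i \in h @: V.
  by case/imsetP => -[a al]; rewrite inE /= => hal ->; exists a, al; rewrite -ltnS.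
apply: contraT => i_notin_hV.
have sum_hV : \sum_(j in h @: V) 'chi_j 1%g ^+ 2 = #|G|%:R.
  rewrite big_imset //= cardG -sum_dih_r_sqr natr_sum; apply: eq_big => p.
    by rewrite inE.
  by rewrite /h theta_iirrE theta1 natrX.
have := irr_sum_square G; rewrite (bigID (mem (h @: V))) /= sum_hV -[RHS]addr0.
move/addrI/eqP; rewrite psumr_eq0 => [/allP/(_ i)|j _]; last exact/exprn_ge0/ltW/irr1_gt0.
by rewrite mem_index_enum i_notin_hV expf_eq0 (negbTE (irr1_neq0 i)) => /(_ isT).
Qed.

Lemma omega_bar (c : int) :
  omega ^+ dih_bar d c = omega ^ c \/ omega ^+ dih_bar d c = (omega ^ c)^-1.
Proof.
set m := `|(c %% d%:Z)%Z|%N.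
have d_neq0 : d%:Z != 0 by rewrite eqz_nat -lt0n.
have def_m : (c %% d%:Z)%Z = m%:Z by rewrite /m gez0_abs // modz_ge0.
have lt_md : (m < d)%N by rewrite -ltz_nat -def_m ltz_pmod // ltz_nat.
have -> : omega ^ c = omega ^+ m.
  rewrite {1}(divz_eq c d%:Z) expfzDr ?omega_neq0 // def_m -exprnP [(_ %/ _)%Z * _]mulrC.
  by rewrite -exprz_exp -exprnP (prim_expr_order omega_prim) exp1rz mul1r.
rewrite /dih_bar -/m; case: (leqP m (d - m)) => _; [left | right] => //.
apply: (mulIf (expf_neq0 m omega_neq0)); rewrite mulVf ?expf_neq0 ?omega_neq0 //.
by rewrite -exprD subnK ?(prim_expr_order omega_prim) // ltnW.
Qed.

Definition bar_sum a b t : nat := dih_bar d (a%:Z + b%:Z * (-1) ^+ t).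
Definition sum_root a b t : algC :=
  omega ^+ a * (if t == 0%N then omega ^+ b else (omega ^+ b)^-1).

Lemma bar_sum_le a b t : (bar_sum a b t <= d./2)%N.
Proof.
rewrite /bar_sum /dih_bar; set m := `|_|%N.
have := odd_double_half d; rewrite -muln2; case: leqP; lia.
Qed.

Lemma sum_root_unity a b t : sum_root a b t ^+ d = 1.
Proof.
by rewrite /sum_root exprMn omegaX_unity; case: eqP; rewrite ?exprVn omegaX_unity ?invr1 mulr1.
Qed.

Lemma omega_bar_sum a b t : (t < 2)%N ->
  omega ^+ bar_sum a b t = sum_root a b t \/ omega ^+ bar_sum a b t = (sum_root a b t)^-1.
Proof.
move=> lt_t2; suff -> : sum_root a b t = omega ^ (a%:Z + b%:Z * (-1) ^+ t) by apply: omega_bar.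
rewrite /sum_root expfzDr ?omega_neq0 // -!exprnP; case: t lt_t2 => [|[|//]] _ /=.
  by rewrite expr0 mulr1 -exprnP.
by rewrite expr1 mulrN1 -invr_expz -exprnP.
Qed.

Lemma theta_bar_sum a b t g : (t < 2)%N -> theta (bar_sum a b t) g = theta_root (sum_root a b t) g.
Proof.
move=> lt_t2; rewrite /theta.
by case: (omega_bar_sum a b lt_t2) => ->; rewrite ?theta_rootV ?sum_root_unity.
Qed.

Lemma dih_s_bar_sum a b t : (t < 2)%N ->
  dih_s d (bar_sum a b t) = if sum_root a b t ^+ 2 == 1 then 2%N else 1%N.
Proof.
move=> lt_t2; rewrite /dih_s dih_rE.
by case: (omega_bar_sum a b lt_t2) => ->; rewrite ?exprVn ?invr_eq1; case: ifP.
Qed.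

Lemma sum_theta_root z : z ^+ d = 1 ->
  \sum_(g < (if z ^+ 2 == 1 then 2 else 1)) theta_root z g = chi_two z.
Proof.
move=> zd; rewrite /theta_root.
case: ifP => [/eqP z2 | _]; rewrite !big_ord_recl big_ord0 addr0 //.
by rewrite chi_two_split // expr0 expr1.
Qed.

Definition parity_ok a al b be g : bool :=
  ((gcdn (dih_s d a) (dih_s d b))%:Z %| al%:Z + be%:Z - g%:Z)%Z.

Lemma theta_mul a al b be : (al < dih_s d a)%N -> (be < dih_s d b)%N ->
  theta a al * theta b be = ((gcdn (dih_r d a) (dih_r d b))%:R / (dih_r d b)%:R) *:
    \sum_(t < dih_r d b) \sum_(g < dih_s d (bar_sum a b t) | parity_ok a al b be g)
       theta (bar_sum a b t) g.
Proof.
move=> hal hbe.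
have inner (t : 'I_(dih_r d b)) :
    \sum_(g < dih_s d (bar_sum a b t) | parity_ok a al b be g) theta (bar_sum a b t) g =
    \sum_(g < (if sum_root a b t ^+ 2 == 1 then 2 else 1) | parity_ok a al b be g)
       theta_root (sum_root a b t) g.
  have lt_t2 : (t < 2)%N by apply: leq_trans (ltn_ord t) _; rewrite /dih_r; case: ifP.
  by rewrite dih_s_bar_sum //; apply: eq_bigr => g _; apply: theta_bar_sum.
rewrite (eq_bigr _ (fun t _ => inner t)) {inner}.
move: hal hbe; rewrite /parity_ok /dih_s !dih_rE /sum_root /theta.
have [ud vd] := (omegaX_unity a, omegaX_unity b).
set u := omega ^+ a in ud *; set v := omega ^+ b in vd *.
have uvd : (u * v) ^+ d = 1 by rewrite exprMn ud vd mulr1.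
have uVvd : (u * v^-1) ^+ d = 1 by rewrite exprMn exprVn ud vd invr1 mulr1.
rewrite /theta_root; case: ifP => /eqP u2; case: ifP => /eqP v2 hal hbe /=.
- have uv2 : (u * v) ^+ 2 = 1 by rewrite exprMn u2 v2 mulr1.
  rewrite big_ord_recl big_ord0 addr0 /= uv2 eqxx divr1 scale1r.
  rewrite chi_lin_mul ?sqrN1X // big_mkcond !big_ord_recl big_ord0 /bump /=.
  by case: al hal => [|[|//]] _; case: be hbe => [|[|//]] _;
    rewrite /= ?expr0 ?expr1 ?mulrNN ?mulr1 ?mul1r ?addr0 ?add0r.
- have uv2 : (u * v) ^+ 2 != 1 by rewrite exprMn u2 mul1r; apply/eqP.
  have uVv2 : (u * v^-1) ^+ 2 != 1 by rewrite exprMn u2 mul1r exprVn invr_eq1; apply/eqP.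
  rewrite !big_ord_recl big_ord0 addr0 /= (negbTE uv2) (negbTE uVv2).
  rewrite !big_ord1_cond ?dvd1z //= chi_lin_two_mul ?sqrN1X //.
  have -> : chi_two (u * v^-1) = chi_two (u * v).
    by rewrite -chi_twoV // invfM invrK sqr1_inv // mulrC.
  by rewrite -mulr2n -scaler_nat scalerA mul1r mulVf ?pnatr_eq0 // scale1r.
- have uv2 : (u * v) ^+ 2 != 1 by rewrite exprMn v2 mulr1; apply/eqP.
  rewrite big_ord_recl big_ord0 addr0 /= (negbTE uv2) divr1 scale1r.
  by rewrite big_ord1_cond ?dvd1z //= mulrC chi_lin_two_mul ?sqrN1X // mulrC.
- rewrite divff ?pnatr_eq0 // scale1r !big_ord_recl big_ord0 addr0 /=.
  under eq_bigl do rewrite dvd1z. under [in X in _ + X]eq_bigl do rewrite dvd1z.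
  by rewrite !sum_theta_root // /theta_root chi_two_mul.
Qed.

Definition theta_mult a al b be c g : nat :=
  \sum_(t < dih_r d b) \sum_(g' < dih_s d (bar_sum a b t) | parity_ok a al b be g')
     ((bar_sum a b t == c) && (g' == g :> nat)).

Lemma cfdot_theta c g c' g' : (c <= d./2)%N -> (g < dih_s d c)%N ->
  (c' <= d./2)%N -> (g' < dih_s d c')%N ->
  '[theta c g, theta c' g'] = ((c == c') && (g == g'))%:R.
Proof.
by move=> hc hg hc' hg'; rewrite -!theta_iirrE cfdot_irr eq_theta_iirr.
Qed.

Lemma cfdot_theta_mul a al b be c g : (al < dih_s d a)%N -> (be < dih_s d b)%N ->
  (c <= d./2)%N -> (g < dih_s d c)%N ->
  '[theta a al * theta b be, theta c g] =
    (gcdn (dih_r d a) (dih_r d b))%:R / (dih_r d b)%:R * (theta_mult a al b be c g)%:R.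
Proof.
move=> hal hbe hc hg; rewrite theta_mul // cfdotZl cfdot_suml; congr (_ * _).
rewrite natr_sum; apply: eq_bigr => t _; rewrite cfdot_suml natr_sum.
by apply: eq_bigr => g' _; rewrite cfdot_theta ?bar_sum_le.
Qed.

Section Families.
Variables (Q : finType) (mul : Q -> Q -> Q).

Definition dihedral_family (S : nat -> nat -> {set Q}) : Prop :=
  [/\ (forall a alpha, (a <= d./2)%N -> (alpha < dih_s d a)%N ->
         #|S a alpha| = (dih_r d a ^ 2)%N),
      (forall a alpha b beta, (a <= d./2)%N -> (alpha < dih_s d a)%N ->
         (b <= d./2)%N -> (beta < dih_s d b)%N -> (a, alpha) != (b, beta) ->
         [disjoint S a alpha & S b beta]) &
      (forall a alpha b beta, (a <= d./2)%N -> (alpha < dih_s d a)%N ->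
         (b <= d./2)%N -> (beta < dih_s d b)%N ->
         forall q : Q,
           (prod_coef mul (S a alpha) (S b beta) q)%:R = rhs_coef d S a alpha b beta q)].

Definition sole_block (S : nat -> nat -> {set Q}) c g q : Prop :=
  forall c' g', (c' <= d./2)%N -> (g' < dih_s d c')%N -> (c', g') != (c, g) ->
  q \notin S c' g'.

Lemma rhs_coefE (S : nat -> nat -> {set Q}) a al b be c g q :
  q \in S c g -> sole_block S c g q ->
  rhs_coef d S a al b be q = ((dih_r d a * gcdn (dih_r d a) (dih_r d b))%N)%:R *
    ((theta_mult a al b be c g)%:R / (dih_r d c)%:R).
Proof.
move=> qS q_notin; rewrite /rhs_coef; congr (_ * _); rewrite /theta_mult natr_sum mulr_suml.
apply: eq_bigr => t _ /=; rewrite -/(bar_sum a b t) natr_sum mulr_suml.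
apply: eq_bigr => g' _; case: andP => [[/eqP bc /eqP g'g] | c'g'_neq]; first by rewrite g'g bc qS.
rewrite (negbTE (q_notin _ _ (bar_sum_le a b t) (ltn_ord g') _)) ?mul0r //.
by rewrite xpair_eqE; apply/andP.
Qed.

Lemma cover_equation_theta (n : nat) a al b be c g :
  (al < dih_s d a)%N -> (be < dih_s d b)%N -> (c <= d./2)%N -> (g < dih_s d c)%N ->
  let i := theta_iirr a al in let j := theta_iirr b be in let k := theta_iirr c g in
  (n%:R * 'chi_k 1%g = 'chi_i 1%g * 'chi_j 1%g * '['chi_i * 'chi_j, 'chi_k]) <->
  (n * dih_r d c = dih_r d a * gcdn (dih_r d a) (dih_r d b) * theta_mult a al b be c g)%N.
Proof.
move=> hal hbe hc hg /=; rewrite !theta_iirrE !theta1 cfdot_theta_mul //.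
have rb_neq0 : (dih_r d b)%:R != 0 :> algC by rewrite pnatr_eq0 -lt0n dih_r_gt0.
set m := theta_mult _ _ _ _ _ _; set ra := dih_r d a; set rb := dih_r d b.
have -> : ra%:R * rb%:R * ((gcdn ra rb)%:R / rb%:R * m%:R) = (ra * gcdn ra rb * m)%N%:R :> algC.
  by rewrite !natrM; field.
by rewrite -natrM; split=> [/eqP | -> //]; rewrite eqr_nat => /eqP.
Qed.

Lemma family_equation_nat (S : nat -> nat -> {set Q}) (n : nat) a al b be c g q :
  q \in S c g -> sole_block S c g q ->
  n%:R = rhs_coef d S a al b be q <->
  (n * dih_r d c = dih_r d a * gcdn (dih_r d a) (dih_r d b) * theta_mult a al b be c g)%N.
Proof.
move=> qS q_notin; rewrite (rhs_coefE _ _ _ _ qS q_notin) mulrA.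
have rc_neq0 : (dih_r d c)%:R != 0 :> rat by rewrite pnatr_eq0 -lt0n dih_r_gt0.
rewrite -natrM; split=> [n_eq | nat_eq].
  by apply/eqP; rewrite -(eqr_nat rat) natrM n_eq divfK.
by apply: (mulIf rc_neq0); rewrite divfK // -!natrM nat_eq.
Qed.

Lemma block_notin (S : nat -> nat -> {set Q}) c g q :
  (forall a alpha b beta, (a <= d./2)%N -> (alpha < dih_s d a)%N ->
     (b <= d./2)%N -> (beta < dih_s d b)%N -> (a, alpha) != (b, beta) ->
     [disjoint S a alpha & S b beta]) ->
  (c <= d./2)%N -> (g < dih_s d c)%N -> q \in S c g -> sole_block S c g q.
Proof.
move=> disjS hc hg qS c' g' hc' hg' neq.
by rewrite (disjointFl (disjS _ _ _ _ hc' hg' hc hg neq)).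
Qed.

Lemma family_of_cover (f : Q -> Iirr G) : cover_equations mul f ->
  dihedral_family (fun a al => [set q | f q == theta_iirr a al]).
Proof.
case=> card_fibre mul_countE; split.
- move=> a al ha hal; apply/eqP; rewrite -(eqr_nat algC) card_fibre natrX.
  by rewrite theta_iirrE theta1.
- move=> a al b be ha hal hb hbe neq; apply/pred0P => q /=; rewrite !inE.
  rewrite -eq_theta_iirr // in neq.
  by apply: contraNF neq => /andP[/eqP <- /eqP <-].
move=> a al b be ha hal hb hbe q.
have [c [g [hc hg fq]]] := theta_iirr_surj (f q).
rewrite (@family_equation_nat _ _ _ _ _ _ c g); last first.
- by move=> c' g' hc' hg' neq; rewrite inE -fq eq_theta_iirr // eq_sym.
- by rewrite inE fq.
apply/(cover_equation_theta _ hal hbe hc hg); rewrite fq -mul_countE.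
by congr (_%:R * _); apply: eq_card => p; rewrite !inE.
Qed.

Lemma family_covers S : dihedral_family S -> #|Q| = (2 * d)%N ->
  forall q, exists c g, [/\ (c <= d./2)%N, (g < dih_s d c)%N & q \in S c g].
Proof.
case=> cardS disjS _ cardQ.
pose F (p : 'I_(d./2).+1 * 'I_2) := if (p.2 < dih_s d p.1)%N then S p.1 p.2 else set0.
have disjF p p' : p != p' -> [disjoint F p & F p'].
  move: p p' => [a al] [b be] neq; rewrite /F /=.
  case: ifP => hal; case: ifP => hbe; rewrite -setI_eq0 ?setI0 ?set0I // setI_eq0.
  by apply: disjS; rewrite -1?ltnS //; apply: contra neq; rewrite !xpair_eqE.
have sumF : (\sum_p #|F p|)%N = #|Q|.
  rewrite cardQ -sum_dih_r_sqr [RHS]big_mkcond; apply: eq_bigr => p _.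
  by rewrite /F; case: ifP => hp; rewrite ?cards0 // cardS -1?ltnS.
move=> q; have [[a al]] := disjoint_cover disjF sumF q.
by rewrite /F /=; case: ifP => [hal qS | _]; [exists a, al; rewrite -ltnS | rewrite inE].
Qed.

Definition family_label (S : nat -> nat -> {set Q}) (q : Q) : Iirr G :=
  if [pick p : 'I_(d./2).+1 * 'I_2 | (p.2 < dih_s d p.1)%N && (q \in S p.1 p.2)] is Some p
  then theta_iirr p.1 p.2 else 0.

Lemma family_labelP S q a al : dihedral_family S -> #|Q| = (2 * d)%N ->
  (a <= d./2)%N -> (al < dih_s d a)%N ->
  (family_label S q == theta_iirr a al) = (q \in S a al).
Proof.
move=> famS cardQ ha hal; have [_ disjS _] := famS.
have [c [g [hc hg qS]]] := family_covers famS cardQ q.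
have -> : family_label S q = theta_iirr c g.
  rewrite /family_label; case: pickP => [[c' g'] /andP[/= hg' qS'] | none].
    have hc' : (c' <= d./2)%N by rewrite -ltnS.
    apply/eqP; rewrite eq_theta_iirr //; apply: contraLR qS' => neq.
    exact: (block_notin disjS hc hg qS).
  have lt_g2 : (g < 2)%N := leq_trans hg (leq_div _ _).
  by have := none (Ordinal (hc : c < (d./2).+1)%N, Ordinal lt_g2); rewrite /= hg qS.
rewrite eq_theta_iirr //; apply/eqP/idP => [[<- <-] // | qS'].
by apply: contraTeq qS' => neq; rewrite (block_notin disjS hc hg qS) // eq_sym.
Qed.

Lemma cover_of_family S : dihedral_family S -> #|Q| = (2 * d)%N ->
  exists f : Q -> Iirr G, cover_equations mul f.
Proof.
move=> famS cardQ; have [cardS _ mulS] := famS.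
have fibreE a al : (a <= d./2)%N -> (al < dih_s d a)%N ->
    [set q | family_label S q == theta_iirr a al] = S a al.
  by move=> ha hal; apply/setP => q; rewrite inE family_labelP.
exists (family_label S); split=> [i | i j q].
  have [a [al [ha hal <-]]] := theta_iirr_surj i.
  by rewrite fibreE // cardS // natrX theta_iirrE theta1.
have [a [al [ha hal <-]]] := theta_iirr_surj i.
have [b [be [hb hbe <-]]] := theta_iirr_surj j.
have [c [g [hc hg qS]]] := family_covers famS cardQ q.
have /eqP -> : family_label S q == theta_iirr c g by rewrite family_labelP.
apply/(cover_equation_theta _ hal hbe hc hg).
have [_ disjS _] := famS.
apply/(@family_equation_nat S _ a al b be c g q qS (block_notin disjS hc hg qS)).
by rewrite -mulS //; congr _%:R; apply: eq_card => p; rewrite !inE !family_labelP.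
Qed.

Lemma dihedral_balanced_coverP : #|Q| = (2 * d)%N ->
  balanced_cover G mul <-> exists S, dihedral_family S.
Proof.
move=> cardQ; apply: iff_trans (balanced_coverP mul _) _; first by rewrite cardQ cardG.
split=> [[f /family_of_cover famS] | [S famS]]; first by eexists; apply: famS.
exact: cover_of_family famS cardQ.
Qed.

End Families.

End DihedralGroup.

Local Open Scope ring_scope.

Theorem mainTheorem4 (d : nat) (gT : finGroupType) (G : {group gT}) (x y : gT)
  (Q : finType) (mul : Q -> Q -> Q) :
  (0 < d)%N -> dihedral_pres gT d G x y -> is_quasigroup mul -> #|Q| = (2 * d)%N ->
  balanced_cover G mul <->
  exists S : nat -> nat -> {set Q},
    [/\ (forall a alpha, (a <= d./2)%N -> (alpha < dih_s d a)%N ->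
           #|S a alpha| = (dih_r d a ^ 2)%N),
        (forall a alpha b beta, (a <= d./2)%N -> (alpha < dih_s d a)%N ->
           (b <= d./2)%N -> (beta < dih_s d b)%N -> (a, alpha) != (b, beta) ->
           [disjoint S a alpha & S b beta]) &
        (forall a alpha b beta, (a <= d./2)%N -> (alpha < dih_s d a)%N ->
           (b <= d./2)%N -> (beta < dih_s d b)%N ->
           forall q : Q,
             (prod_coef mul (S a alpha) (S b beta) q)%:R = rhs_coef d S a alpha b beta q)].
Proof.
(* The characterisation holds for any binary operation on [Q]. *)
move=> d_gt0 [genG y2 xd xJy cardG] _.
exact: (dihedral_balanced_coverP d_gt0 genG y2 xd xJy cardG).
Qed.
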